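(* Let $K$ be a field of characteristic zero and $W_n$ the Witt Lie algebra. Then $\sigma(\mathcal{H}_n)=\mathcal{H}_n$ for every Lie algebra automorphism $\sigma$ of $W_n$.
   Context: $W_n=\mathrm{Der}_K(K[x_1^{\pm1},\ldots,x_n^{\pm1}])$, $\mathcal{H}_n=\bigoplus_{i=1}^nKH_i$ with $H_i=x_i\partial_i$, $\partial_i=\partial/\partial x_i$. *)

From HB Require Import structures.
From mathcomp Require Import all_boot all_order all_algebra.
Set Implicit Arguments. Unset Strict Implicit. Unset Printing Implicit Defensive.
Import Order.TTheory GRing.Theory Num.Theory.
Local Open Scope ring_scope.

Section Witt.
Variables (K : fieldType) (n : nat) (L : comUnitAlgType K) (x : 'I_n -> L).

Definition lmonom (a : {ffun 'I_n -> int}) : L := \prod_(i < n) (x i) ^ (a i).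

(* (L, x) is the Laurent polynomial algebra K[x_1^{±1},...,x_n^{±1}]:
   the x_i are units and the Laurent monomials form a K-basis of L. *)
Definition is_laurent_algebra : Prop :=
  (forall i, x i \is a GRing.unit) /\
  (forall f : L, exists (s : seq {ffun 'I_n -> int}) (c : {ffun 'I_n -> int} -> K),
      f = \sum_(a <- s) c a *: lmonom a) /\
  (forall (s : seq {ffun 'I_n -> int}) (c : {ffun 'I_n -> int} -> K),
      uniq s -> \sum_(a <- s) c a *: lmonom a = 0 -> forall a, a \in s -> c a = 0).

Definition is_derivation (D : L -> L) : Prop :=
  (forall (k : K) (f g : L), D (k *: f + g) = k *: D f + D g) /\
  (forall f g : L, D (f * g) = f * D g + D f * g).

Definition Witt := {D : L -> L | is_derivation D}.

(* H_n = span_K {H_i = x_i d_i}: D = sum_i c_i H_i, i.e. the derivation D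
   with D(x_j) = c_j x_j for all j (H_i is the derivation with H_i(x_j) = delta_ij x_j). *)
Definition in_cartan (D : Witt) : Prop :=
  exists c : 'I_n -> K, forall j, proj1_sig D (x j) = c j *: x j.

Definition is_lie_aut (s : Witt -> Witt) : Prop :=
  bijective s /\
  (forall (k : K) (D E F : Witt),
      (forall f, proj1_sig F f = k *: proj1_sig D f + proj1_sig E f) ->
      forall f, proj1_sig (s F) f = k *: proj1_sig (s D) f + proj1_sig (s E) f) /\
  (forall D E F : Witt,
      (forall f, proj1_sig F f =
                 proj1_sig D (proj1_sig E f) - proj1_sig E (proj1_sig D f)) ->
      forall f, proj1_sig (s F) f =
                proj1_sig (s D) (proj1_sig (s E) f) - proj1_sig (s E) (proj1_sig (s D) f)).

End Witt.

From HB Require Import structures.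
From mathcomp Require Import all_boot all_order all_algebra.
From mathcomp Require Import ring.
From Stdlib Require Import Classical ClassicalEpsilon ProofIrrelevance FunctionalExtensionality.
Set Implicit Arguments. Unset Strict Implicit. Unset Printing Implicit Defensive.
Import Order.TTheory GRing.Theory Num.Theory.
Local Open Scope ring_scope.

(* The Cartan subalgebra [H_n] is characterised intrinsically as the set
   of [D] in [W_n] for which [ad D] is locally finite (every [E] is killed by a nonzero
   polynomial in [ad D]); Lie automorphisms clearly preserve this property.
   If [D (x_j) = c_j x_j], then [D] acts diagonally on Laurent monomials, so [ad D]
   acts diagonally on [E (x_j)], and the polynomial whose roots are the finitely many
   eigenvalues occurring there kills [E].
   Conversely, [ad D] applied to [f D] gives [(D f) D], so [p(ad D)] kills [f D] iff
   [p(D) f] vanishes (for [D <> 0], [L] being a domain): [D] is locally finite on [L].  Write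
   [D = sum_j u_j H_j] with [u_j = x_j^-1 D (x_j)] and let [b] be the largest exponent
   of the [u_j] for some monomial order.  If [b > 0], the top coefficient of
   [D^k x^a] is [prod_(i < k) V (a + i b)] for an additive [V] ([shift_weight b]), so
   local finiteness yields [V a + i V b = 0] for some [i]; for [a = +-e_j] this forces the top
   coefficients of the [u_j] to vanish in characteristic 0.  With the lexicographic
   order and its reverse, every [u_j] is a constant. *)

Lemma sum_only1_seq (R : nmodType) (I : eqType) (s : seq I) (F : I -> R) c :
  uniq s -> (forall e, e != c -> F e = 0) -> (c \notin s -> F c = 0) ->
  \sum_(e <- s) F e = F c.
Proof.
move=> us F0 Fc; case: (boolP (c \in s)) => cs.
  by rewrite (bigD1_seq c) //= big1 ?addr0 // => i /F0.
rewrite Fc // big1_seq // => i /= si; apply: F0.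
by apply: contraNneq cs => <-.
Qed.

Lemma sum_neq0 (R : nmodType) (I : Type) (r : seq I) (F : I -> R) :
  \sum_(i <- r) F i != 0 -> exists i, F i != 0.
Proof.
elim: r => [|i r IH]; first by rewrite big_nil eqxx.
rewrite big_cons; case: (eqVneq (F i) 0) => [->|]; last by exists i.
by rewrite add0r.
Qed.

Section Derivations.
Variables (K : fieldType) (L : comUnitAlgType K).

Definition logder (D : L -> L) (u : L) : L := u^-1 * D u.

Definition ad (D G : L -> L) : L -> L := fun f => D (G f) - G (D f).

Definition poly_iter (p : {poly K}) (A : L -> L) (f : L) : L :=
  \sum_(k < size p) p`_k *: iter k A f.

Definition locally_finite (A : L -> L) : Prop :=
  forall f, exists2 p : {poly K}, p != 0 & poly_iter p A f = 0.

Definition ad_locally_finite (D : L -> L) : Prop :=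
  forall E, is_derivation E -> exists2 p : {poly K}, p != 0 &
    forall f, \sum_(k < size p) p`_k *: iter k (ad D) E f = 0.

Section Derivation.
Variable D : L -> L.
Hypothesis HD : is_derivation D.

Lemma derD f g : D (f + g) = D f + D g.
Proof. by case: HD => lin _; have := lin 1 f g; rewrite !scale1r. Qed.

Lemma der0 : D 0 = 0.
Proof. by apply: (addrI (D 0)); rewrite -derD !addr0. Qed.

Lemma derZ k f : D (k *: f) = k *: D f.
Proof. by case: HD => lin _; rewrite -[k *: f]addr0 lin der0 addr0. Qed.

Lemma derM f g : D (f * g) = f * D g + D f * g.
Proof. by case: HD. Qed.

Lemma der_sum (I : Type) (r : seq I) (F : I -> L) :
  D (\sum_(i <- r) F i) = \sum_(i <- r) D (F i).
Proof.
elim: r => [|i r IH]; first by rewrite !big_nil der0.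
by rewrite !big_cons derD IH.
Qed.

Lemma der1 : D 1 = 0.
Proof.
have := derM 1 1; rewrite !mul1r mulr1 => E.
by apply: (addrI (D 1)); rewrite addr0 -E.
Qed.

Lemma derV u : u \is a GRing.unit -> D u^-1 = - (u^-1 * logder D u).
Proof.
move=> Uu; have := derM u u^-1; rewrite mulrV // der1 => /eqP.
rewrite eq_sym addr_eq0 => /eqP E.
rewrite -[D u^-1]mul1r -(mulVr Uu) -mulrA E mulrN; congr (- _).
by rewrite /logder (mulrC (D u)) mulrCA.
Qed.

Lemma derXn u m : u \is a GRing.unit -> D (u ^+ m) = u ^+ m * (m%:R * logder D u).
Proof.
move=> Uu; elim: m => [|m IH]; first by rewrite expr0 der1 mul0r mulr0.
have E : u * u ^+ m * logder D u = D u * u ^+ m.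
  by rewrite /logder (mulrC u) -mulrA (mulrA u) mulrV // mul1r mulrC.
by rewrite exprS derM IH mulrS mulrDl mul1r mulrDr E !mulrA addrC.
Qed.

Lemma derXz u z : u \is a GRing.unit -> D (u ^ z) = u ^ z * (z%:~R * logder D u).
Proof.
move=> Uu; case: z => m; first by rewrite derXn.
rewrite /exprz derV ?unitrX // {1}/logder derXn // NegzE.
rewrite (mulrA (u ^- m.+1) (u ^+ m.+1)) mulVr ?unitrX // mul1r -mulrN.
by rewrite -mulNr intrN.
Qed.

Lemma der_prod (I : Type) (r : seq I) (F G : I -> L) :
  (forall i, D (F i) = F i * G i) ->
  D (\prod_(i <- r) F i) = \prod_(i <- r) F i * \sum_(i <- r) G i.
Proof.
move=> DF; elim: r => [|i r IH]; first by rewrite !big_nil der1 mulr0.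
rewrite !big_cons derM IH DF mulrDr addrC !mulrA; congr (_ + _).
by rewrite -mulrA (mulrC (G i)) mulrA.
Qed.

End Derivation.

Lemma derivation0 : is_derivation (fun _ : L => 0).
Proof. by split => *; rewrite ?scaler0 ?mulr0 ?mul0r ?addr0. Qed.

Lemma derivation_lin (k : K) (D E : L -> L) : is_derivation D -> is_derivation E ->
  is_derivation (fun f => k *: D f + E f).
Proof.
move=> HD HE; split=> [k' f g|f g].
  rewrite (derD HE) (derZ HE) (derD HD) (derZ HD).
  by rewrite !scalerDr !scalerA (mulrC k k') addrACA.
by rewrite (derM HE) (derM HD) mulrDr mulrDl scalerDr scalerAr scalerAl addrACA.
Qed.

Lemma derivation_sum (I : Type) (r : seq I) (c : I -> K) (F : I -> L -> L) :
  (forall i, is_derivation (F i)) -> is_derivation (fun f => \sum_(i <- r) c i *: F i f).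
Proof.
move=> HF; split=> [k f g|f g].
  under eq_bigr do rewrite (derD (HF _)) (derZ (HF _)) scalerDr scalerA mulrC -scalerA.
  by rewrite big_split /= scaler_sumr.
under eq_bigr do rewrite (derM (HF _)) scalerDr scalerAr scalerAl.
by rewrite big_split /= -mulr_sumr -mulr_suml.
Qed.

Lemma derivation_mull (h : L) (D : L -> L) : is_derivation D -> is_derivation (fun f => h * D f).
Proof.
move=> HD; split=> [k f g|f g].
  by rewrite (derD HD) (derZ HD) mulrDr scalerAr.
by rewrite (derM HD) mulrDr (mulrCA h f) (mulrA h).
Qed.

Lemma derivation_ad (D E : L -> L) : is_derivation D -> is_derivation E -> is_derivation (ad D E).
Proof.
move=> HD HE; split=> [k f g|f g]; rewrite /ad.
  rewrite (derD HE) (derZ HE) (derD HD) (derZ HD).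
  by rewrite (derD HD) (derZ HD) (derD HE) (derZ HE) scalerBr addrACA opprD.
rewrite (derM HE) (derD HD) !(derM HD) (derD HE) !(derM HE).
ring.
Qed.

Lemma derivation_ad_iter (D E : L -> L) k :
  is_derivation D -> is_derivation E -> is_derivation (iter k (ad D) E).
Proof. by move=> HD HE; elim: k => [//|k IH] /=; exact: derivation_ad. Qed.

Lemma iter_ad_mull (D : L -> L) (f : L) k g : is_derivation D ->
  iter k (ad D) (fun h => f * D h) g = iter k D f * D g.
Proof.
move=> HD; elim: k g => [//|k IH] g /=.
by rewrite /ad !IH (derM HD) [_ * D (D g) + _]addrC addrK.
Qed.

End Derivations.

Section Lex.
Variable n : nat.
Local Notation Exp := {ffun 'I_n -> int}.

Definition lexlt (a b : Exp) : bool :=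
  [exists i : 'I_n, (a i < b i) && [forall j : 'I_n, (j < i)%N ==> (a j == b j)]].

Lemma lexltxx a : lexlt a a = false.
Proof. by apply/negbTE/existsP => [[i]]; rewrite ltxx. Qed.

Lemma lexlt_trans a b c : lexlt a b -> lexlt b c -> lexlt a c.
Proof.
move=> /existsP [i /andP [abi /forallP abE]] /existsP [k /andP [bck /forallP bcE]].
have eq_below (j : 'I_n) : (j < minn i k)%N -> a j == c j.
  by rewrite leq_min => /andP [ji jk]; rewrite (eqP (implyP (abE j) ji)) (implyP (bcE j) jk).
apply/existsP; case: (ltngtP i k) => ik.
- exists i; rewrite -(eqP (implyP (bcE i) ik)) abi /=.
  by apply/forallP => j; apply/implyP => ji; apply: eq_below; rewrite (minn_idPl (ltnW ik)).
- exists k; rewrite (eqP (implyP (abE k) ik)) bck /=.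
  by apply/forallP => j; apply/implyP => jk; apply: eq_below; rewrite (minn_idPr (ltnW ik)).
- have ik' : i = k by apply: val_inj.
  subst k; exists i; rewrite (lt_trans abi bck) /=.
  by apply/forallP => j; apply/implyP => ji; apply: eq_below; rewrite minnn.
Qed.

Lemma lexlt_total a b : a != b -> lexlt a b || lexlt b a.
Proof.
move=> ab; have [i0 abi0] : exists i, a i != b i.
  by apply/existsP; apply: contraR ab => /existsPn abE; apply/eqP/ffunP => i; apply/eqP/negPn.
case: (@arg_minnP _ i0 (fun i => a i != b i) (fun i : 'I_n => nat_of_ord i) abi0) => i abi imin.
have eq_below (j : 'I_n) : (j < i)%N -> a j == b j.
  by move=> ji; apply: contraTT ji => /imin; rewrite leqNgt.
case/orP: (lt_total abi) => lt_ab; apply/orP; [left|right]; apply/existsP; exists i;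
  rewrite lt_ab /=; apply/forallP => j; apply/implyP => /eq_below //.
by rewrite eq_sym.
Qed.

Lemma lexltD2r a b c : lexlt a b -> lexlt (a + c) (b + c).
Proof.
move=> /existsP [i /andP [abi /forallP abE]]; apply/existsP; exists i.
rewrite !ffunE ltrD2r abi /=; apply/forallP => j; apply/implyP => ji.
by rewrite !ffunE (eqP (implyP (abE j) ji)).
Qed.

End Lex.

Section Laurent.
Variables (K : fieldType) (n : nat) (L : comUnitAlgType K) (x : 'I_n -> L).
Hypothesis Hl : is_laurent_algebra x.
Local Notation Exp := {ffun 'I_n -> int}.
Local Notation lm := (lmonom x).

Lemma unit_gen i : x i \is a GRing.unit.
Proof. by case: Hl. Qed.

Lemma lmonomD a b : lm (a + b) = lm a * lm b.
Proof.
rewrite /lmonom -big_split /=; apply: eq_bigr => i _.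
by rewrite ffunE exprzDr // unit_gen.
Qed.

Lemma lmonom0 : lm 0 = 1.
Proof. by rewrite /lmonom big1 // => i _; rewrite ffunE expr0z. Qed.

Lemma exists_expansion f : exists r : seq (Exp * K), f = \sum_(p <- r) p.2 *: lm p.1.
Proof.
case: Hl => _ [span _]; case: (span f) => s [c ->].
by exists [seq (a, c a) | a <- s]; rewrite big_map.
Qed.

(* An expansion of [f] picked by choice; its exponents may repeat. *)
Definition expansion f : seq (Exp * K) :=
  proj1_sig (constructive_indefinite_description _ (exists_expansion f)).

Lemma expansionE f : f = \sum_(p <- expansion f) p.2 *: lm p.1.
Proof. exact: proj2_sig (constructive_indefinite_description _ (exists_expansion f)). Qed.

Definition coef (a : Exp) (f : L) : K := \sum_(p <- expansion f) (p.1 == a)%:R * p.2.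

Lemma collect_expansion (t : seq Exp) (r : seq (Exp * K)) :
  uniq t -> {subset map fst r <= t} ->
  \sum_(a <- t) (\sum_(p <- r) (p.1 == a)%:R * p.2) *: lm a =
  \sum_(p <- r) p.2 *: lm p.1.
Proof.
move=> ut rt; under eq_bigr do rewrite scaler_suml.
rewrite exchange_big /=; apply: eq_big_seq => p pr.
rewrite (@sum_only1_seq _ _ t (fun a => ((p.1 == a)%:R * p.2) *: lm a) p.1) //=.
- by rewrite eqxx mul1r.
- by move=> e; rewrite eq_sym => /negbTE ->; rewrite mul0r scale0r.
- by rewrite rt // map_f.
Qed.

(* Linear independence of the monomials: [coef] reads off any expansion. *)
Lemma coef_expansion r f : f = \sum_(p <- r) p.2 *: lm p.1 ->
  forall a, coef a f = \sum_(p <- r) (p.1 == a)%:R * p.2.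
Proof.
move=> Ef a; set t := undup (map fst (expansion f ++ r)).
have ut : uniq t by rewrite undup_uniq.
have sub1 : {subset map fst (expansion f) <= t}.
  by move=> e He; rewrite mem_undup map_cat mem_cat He.
have sub2 : {subset map fst r <= t}.
  by move=> e He; rewrite mem_undup map_cat mem_cat He orbT.
pose d e := coef e f - \sum_(p <- r) (p.1 == e)%:R * p.2.
have d_comb : \sum_(e <- t) d e *: lm e = 0.
  under eq_bigr do rewrite scalerBl.
  by rewrite sumrB collect_expansion // collect_expansion // -expansionE -Ef subrr.
case: Hl => _ [_ indep]; case: (boolP (a \in t)) => aT.
  by apply/eqP; rewrite -subr_eq0; apply/eqP; apply: (indep t d ut d_comb a aT).
have a_new q : q \in map fst (expansion f) ++ map fst r -> (q == a) = false.
  by move=> Hq; apply: contraNF aT => /eqP <-; rewrite mem_undup map_cat.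
rewrite /coef !big1_seq // => p /= Hp; rewrite a_new ?mul0r // mem_cat.
  by apply/orP; right; apply: map_f.
by apply/orP; left; apply: map_f.
Qed.

Lemma coef_lmonom a c : coef a (lm c) = (c == a)%:R.
Proof.
rewrite (@coef_expansion [:: (c, 1)] (lm c)); first by rewrite big_seq1 mulr1.
by rewrite big_seq1 scale1r.
Qed.

Lemma coefD a f g : coef a (f + g) = coef a f + coef a g.
Proof. by rewrite (@coef_expansion (expansion f ++ expansion g)) ?big_cat // -!expansionE. Qed.

Lemma coefZ a k f : coef a (k *: f) = k * coef a f.
Proof.
rewrite (@coef_expansion [seq (p.1, k * p.2) | p <- expansion f]) ?big_map /=.
  by rewrite /coef mulr_sumr; apply: eq_bigr => p _; rewrite mulrCA.
by rewrite {1}(expansionE f) scaler_sumr; apply: eq_bigr => p _; rewrite scalerA.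
Qed.

Lemma coef0 a : coef a 0 = 0.
Proof. by rewrite -(scale0r 0) coefZ mul0r. Qed.

Lemma coef_sum (I : Type) a (r : seq I) (F : I -> L) :
  coef a (\sum_(i <- r) F i) = \sum_(i <- r) coef a (F i).
Proof.
elim: r => [|i r IH]; first by rewrite !big_nil coef0.
by rewrite !big_cons coefD IH.
Qed.

Definition supp f : seq Exp := undup (map fst (expansion f)).

Lemma supp_uniq f : uniq (supp f).
Proof. exact: undup_uniq. Qed.

Lemma coef_supp f : f = \sum_(a <- supp f) coef a f *: lm a.
Proof.
by rewrite /coef collect_expansion ?supp_uniq -?expansionE // => e; rewrite mem_undup.
Qed.

Lemma mem_supp a f : coef a f != 0 -> a \in supp f.
Proof.
apply: contraR => aNf; rewrite /coef big1_seq // => p /= Hp.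
by rewrite (_ : p.1 == a = false) ?mul0r //; apply: contraNF aNf => /eqP <-; rewrite mem_undup map_f.
Qed.

Lemma coef_notin_supp a f : a \notin supp f -> coef a f = 0.
Proof. by apply: contraNeq; apply: mem_supp. Qed.

Lemma coef_eq0 f : (forall a, coef a f = 0) -> f = 0.
Proof. by move=> f0; rewrite (coef_supp f) big1 // => a _; rewrite f0 scale0r. Qed.

Lemma coef_mul d f h : coef d (f * h) =
  \sum_(e <- supp f) \sum_(e' <- supp h) coef e f * coef e' h * (e + e' == d)%:R.
Proof.
rewrite {1}(coef_supp f) {1}(coef_supp h) mulr_suml coef_sum; apply: eq_bigr => e _.
rewrite mulr_sumr coef_sum; apply: eq_bigr => e' _.
by rewrite -scalerAl -scalerAr scalerA -lmonomD coefZ coef_lmonom.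
Qed.

Lemma der_lmonom (D : L -> L) a : is_derivation D ->
  D (lm a) = lm a * \sum_(j < n) (a j)%:~R * logder D (x j).
Proof. by move=> HD; apply: der_prod => // i; rewrite derXz ?unit_gen. Qed.

Lemma derivation_eq0 (D : L -> L) : is_derivation D ->
  (forall j, D (x j) = 0) -> forall f, D f = 0.
Proof.
move=> HD D0 f; rewrite (coef_supp f) der_sum // big1 // => a _.
rewrite derZ // der_lmonom // big1 ?mulr0 ?scaler0 // => j _.
by rewrite /logder D0 !mulr0.
Qed.

(* The derivation [H_j = x_j d/dx_j] of the Cartan subalgebra. *)
Definition cartan_gen j g : L := \sum_(e <- supp g) (coef e g * (e j)%:~R) *: lm e.

Lemma coef_cartan_gen j d g : coef d (cartan_gen j g) = coef d g * (d j)%:~R.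
Proof.
rewrite coef_sum (@sum_only1_seq _ _ _ _ d) ?supp_uniq //.
- by rewrite coefZ coef_lmonom eqxx mulr1.
- by move=> e ne; rewrite coefZ coef_lmonom (negbTE ne) mulr0.
- by move=> /coef_notin_supp ->; rewrite !mul0r scale0r coef0.
Qed.

Lemma der_cartan_decomp (D : L -> L) : is_derivation D ->
  forall g, D g = \sum_(j < n) cartan_gen j g * logder D (x j).
Proof.
move=> HD g; rewrite {1}(coef_supp g) der_sum //.
under [RHS]eq_bigr do rewrite mulr_suml.
rewrite exchange_big /=; apply: eq_bigr => e _.
rewrite derZ // der_lmonom // mulr_sumr scaler_sumr; apply: eq_bigr => j _.
rewrite -scalerAl -scalerA scaler_int -mulrzl; congr (_ *: _).
by rewrite mulr1 mulrzl mulrzAr.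
Qed.

(* A total order on exponents compatible with addition; it need not be a
   well-order, since only finitely many exponents are ever compared. *)
Section MonomialOrder.
Variable mlt : rel Exp.
Hypothesis mltxx : forall a, mlt a a = false.
Hypothesis mlt_trans : forall a b c, mlt a b -> mlt b c -> mlt a c.
Hypothesis mlt_total : forall a b, a != b -> mlt a b || mlt b a.
Hypothesis mltD2r : forall a b c, mlt a b -> mlt (a + c) (b + c).

Let mle a b := (a == b) || mlt a b.

Lemma mlt_neq a b : mlt a b -> a != b.
Proof. by apply: contraTneq => ->; rewrite mltxx. Qed.

Lemma mle_mlt_trans a b c : mle a b -> mlt b c -> mlt a c.
Proof. by case/orP => [/eqP -> //|]; apply: mlt_trans. Qed.

Lemma mlt_mle_trans a b c : mlt a b -> mle b c -> mlt a c.
Proof. by move=> ab; case/orP => [/eqP <- //|]; apply: mlt_trans. Qed.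

Lemma mle_trans a b c : mle a b -> mle b c -> mle a c.
Proof. by case/orP => [/eqP -> //|ab bc]; rewrite /mle (mlt_mle_trans ab bc) orbT. Qed.

Lemma mltD2l a b c : mlt a b -> mlt (c + a) (c + b).
Proof. by rewrite ![c + _]addrC; apply: mltD2r. Qed.

Lemma mleD2r a b c : mle a b -> mle (a + c) (b + c).
Proof. by case/orP => [/eqP -> |ab]; rewrite /mle ?eqxx // mltD2r ?orbT. Qed.

Lemma mleD2l a b c : mle a b -> mle (c + a) (c + b).
Proof. by case/orP => [/eqP -> |ab]; rewrite /mle ?eqxx // mltD2l ?orbT. Qed.

Lemma mleD a b c d : mle a b -> mle c d -> mle (a + c) (b + d).
Proof. by move=> ab cd; apply: (@mle_trans _ (b + c)); [apply: mleD2r | apply: mleD2l]. Qed.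

Lemma mlt_mleD a b c d : mlt a b -> mle c d -> mlt (a + c) (b + d).
Proof. by move=> ab cd; apply: (@mlt_mle_trans _ (b + c)); [apply: mltD2r | apply: mleD2l]. Qed.

Lemma exists_mle_max (s : seq Exp) : s != [::] ->
  exists2 b, b \in s & forall a, a \in s -> mle a b.
Proof.
elim: s => [//|a s IH] _.
have [->|/IH [b bs bmax]] := eqVneq s [::].
  by exists a => [|e]; rewrite ?inE // => /eqP ->; rewrite /mle eqxx.
have [->|ab] := eqVneq a b.
  by exists b => [|e]; rewrite ?inE ?eqxx // => /orP [/eqP ->|/bmax]; rewrite /mle ?eqxx.
case/orP: (mlt_total ab) => [lt_ab|lt_ba].
  exists b => [|e]; rewrite ?inE ?bs ?orbT // => /orP [/eqP ->|/bmax //].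
  by rewrite /mle lt_ab orbT.
exists a => [|e]; rewrite ?inE ?eqxx // => /orP [/eqP ->|/bmax eb].
  by rewrite /mle eqxx.
by rewrite /mle (mle_mlt_trans eb lt_ba) orbT.
Qed.

Definition exps_le f c := forall e, coef e f != 0 -> mle e c.

Lemma exps_le_coef f c e : exps_le f c -> mlt c e -> coef e f = 0.
Proof.
move=> fc ce; apply/eqP; apply: contraT => /fc ec.
by move: (mle_mlt_trans ec ce); rewrite mltxx.
Qed.

Lemma exps_le_lt f c e : exps_le f c -> e != c -> coef e f != 0 -> mlt e c.
Proof. by move=> fc ec /fc /orP [/eqP E|//]; rewrite E eqxx in ec. Qed.

Lemma exists_exps_le f : f != 0 -> exists c, coef c f != 0 /\ exps_le f c.
Proof.
move=> f0; have : [seq e <- supp f | coef e f != 0] != [::].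
  apply: contraNneq f0 => E; apply/eqP; apply: coef_eq0 => a.
  apply/eqP; apply: contraT => fa.
  have : a \in [seq e <- supp f | coef e f != 0] by rewrite mem_filter fa mem_supp.
  by rewrite E.
case/exists_mle_max => c; rewrite mem_filter => /andP [fc _] cmax.
by exists c; split => // e fe; apply: cmax; rewrite mem_filter fe mem_supp.
Qed.

Section Product.
Variables (f h : L) (c c' : Exp).
Hypotheses (fc : exps_le f c) (hc' : exps_le h c').

Lemma exps_le_mul : exps_le (f * h) (c + c').
Proof.
move=> d; rewrite coef_mul => /sum_neq0 [e] /sum_neq0 [e'].
have [-> |fe] := eqVneq (coef e f) 0; first by rewrite !mul0r eqxx.
have [-> |he'] := eqVneq (coef e' h) 0; first by rewrite mulr0 mul0r eqxx.
have [<- _|_] := eqVneq (e + e') d; last by rewrite mulr0 eqxx.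
by apply: mleD; [apply: fc | apply: hc'].
Qed.

Lemma coef_mul_top : coef (c + c') (f * h) = coef c f * coef c' h.
Proof.
rewrite coef_mul (@sum_only1_seq _ _ _ _ c) ?supp_uniq //.
- rewrite (@sum_only1_seq _ _ _ _ c') ?supp_uniq ?eqxx ?mulr1 //.
    move=> e' ne'; have [-> |he'] := eqVneq (coef e' h) 0; first by rewrite mulr0 mul0r.
    by rewrite (negbTE (mlt_neq (mltD2l c (exps_le_lt hc' ne' he')))) mulr0.
  by move=> /coef_notin_supp ->; rewrite mulr0.
- move=> e ne; rewrite big1 // => e' _.
  have [-> |fe] := eqVneq (coef e f) 0; first by rewrite !mul0r.
  have [-> |he'] := eqVneq (coef e' h) 0; first by rewrite mulr0 mul0r.
  by rewrite (negbTE (mlt_neq (mlt_mleD (exps_le_lt fc ne fe) (hc' he')))) mulr0.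
- by move=> /coef_notin_supp ->; rewrite big1 // => e' _; rewrite !mul0r.
Qed.

End Product.

Lemma laurent_mulf_neq0 (f h : L) : f != 0 -> h != 0 -> f * h != 0.
Proof.
move=> /exists_exps_le [c [fc0 fc]] /exists_exps_le [c' [hc0 hc]].
apply: contraNneq (mulf_neq0 fc0 hc0) => fh0.
by rewrite -coef_mul_top // fh0 coef0.
Qed.

Section LocallyFiniteDerivation.
Variable D : L -> L.
Hypothesis HD : is_derivation D.
Hypothesis char0 : [pchar K] =i pred0.
Hypothesis D_lf : locally_finite D.

(* If [b] bounds the exponents of every [logder D (x j)], then
   [shift_weight b c] is the coefficient of [x^(c+b)] in [D x^c]. *)
Definition shift_weight b (c : Exp) : K := \sum_(j < n) (c j)%:~R * coef b (logder D (x j)).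

Lemma shift_weightD b c c' : shift_weight b (c + c') = shift_weight b c + shift_weight b c'.
Proof. by rewrite -big_split; apply: eq_bigr => j _; rewrite ffunE intrD mulrDl. Qed.

Lemma shift_weightMn b c i : shift_weight b (c *+ i) = shift_weight b c *+ i.
Proof.
elim: i => [|i IH]; last by rewrite !mulrS shift_weightD IH.
by rewrite !mulr0n /shift_weight big1 // => j _; rewrite ffunE mul0r.
Qed.

Lemma shift_weightN b c : shift_weight b (- c) = - shift_weight b c.
Proof.
by apply/eqP; rewrite -addr_eq0 -shift_weightD addNr -(mulr0n 0) shift_weightMn mulr0n.
Qed.

Section Top.
Variable b : Exp.
Hypothesis logder_le : forall j, exps_le (logder D (x j)) b.

Lemma exps_le_der g c : exps_le g c -> exps_le (D g) (c + b).
Proof.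
move=> gc d; rewrite (der_cartan_decomp HD) coef_sum => /sum_neq0 [j].
apply: exps_le_mul => // e; rewrite coef_cartan_gen.
by have [->|/gc //] := eqVneq (coef e g) 0; rewrite mul0r eqxx.
Qed.

Lemma coef_der_top g c : exps_le g c -> coef (c + b) (D g) = coef c g * shift_weight b c.
Proof.
move=> gc; rewrite (der_cartan_decomp HD) coef_sum mulr_sumr; apply: eq_bigr => j _.
rewrite coef_mul_top // ?coef_cartan_gen ?mulrA // => e; rewrite coef_cartan_gen.
by have [->|/gc //] := eqVneq (coef e g) 0; rewrite mul0r eqxx.
Qed.

Lemma iter_der_top a k :
  exps_le (iter k D (lm a)) (a + b *+ k) /\
  coef (a + b *+ k) (iter k D (lm a)) = \prod_(i < k) shift_weight b (a + b *+ i).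
Proof.
elim: k => [|k [IH1 IH2]].
  rewrite /= mulr0n addr0 big_ord0 coef_lmonom eqxx; split=> // e.
  by rewrite coef_lmonom; case: (altP (a =P e)) => [->|_]; rewrite /mle ?eqxx.
by rewrite mulrSr addrA; split; [apply: exps_le_der | rewrite /= coef_der_top // IH2 big_ord_recr].
Qed.

Hypothesis b_pos : mlt 0 b.

Lemma mlt_shift a k N : (k < N)%N -> mlt (a + b *+ k) (a + b *+ N).
Proof.
move=> kN; rewrite -(subnKC (ltnW kN)) mulrnDr addrA.
suff : mlt 0 (b *+ (N - k)) by move/(mltD2l (a + b *+ k)); rewrite addr0.
rewrite -subn_gt0 in kN; case: (N - k)%N kN => // m _.
elim: m => [|m IH]; first by rewrite mulr1n.
by apply: mlt_trans IH _; rewrite [b *+ m.+2]mulrSr -{1}[b *+ m.+1]addr0 mltD2l.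
Qed.

(* The top coefficient of [p(D) x^a] is that of its highest iterate, so it must vanish. *)
Lemma shift_weight_root a : exists i : nat, shift_weight b a + shift_weight b b *+ i = 0.
Proof.
case: (D_lf (lm a)) => p p0 pDa0.
have sp : size p = (size p).-1.+1 by rewrite prednK // size_poly_gt0.
set N := (size p).-1 in sp; have NS : (N < size p)%N by rewrite [X in (_ < X)%N]sp.
have := congr1 (coef (a + b *+ N)) pDa0; rewrite coef0 coef_sum.
rewrite (@sum_only1_seq _ _ _ _ (Ordinal NS)) ?index_enum_uniq ?mem_index_enum //=.
  rewrite coefZ (iter_der_top a N).2 => /eqP; rewrite mulf_eq0 -lead_coefE lead_coef_eq0.
  rewrite (negbTE p0) /= prodf_seq_eq0 => /hasP [i _ /= /eqP Ei].
  by exists i; rewrite -shift_weightMn -shift_weightD.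
move=> k kN; rewrite coefZ (exps_le_coef (iter_der_top a k).1) ?mulr0 //.
apply: mlt_shift; have := ltn_ord k; rewrite [X in (_ < X)%N -> _]sp ltnS leq_eqVlt.
by case/orP => // /eqP kN'; case/eqP: kN; apply: val_inj.
Qed.

End Top.

Lemma exists_logder_top j0 a0 : coef a0 (logder D (x j0)) != 0 ->
  exists b, (exists j1, coef b (logder D (x j1)) != 0) /\
            forall j, exps_le (logder D (x j)) b.
Proof.
move=> ja0; pose exps := [seq e <- flatten [seq supp (logder D (x j)) | j <- enum 'I_n] |
                            [exists j, coef e (logder D (x j)) != 0]].
have mem_exps e j : coef e (logder D (x j)) != 0 -> e \in exps.
  move=> je; rewrite mem_filter; apply/andP; split; first by apply/existsP; exists j.
  apply/flattenP; exists (supp (logder D (x j))); last exact: mem_supp.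
  by apply: (map_f (fun j => supp (logder D (x j)))); rewrite mem_enum.
have : exps != [::] by apply: contraTneq (mem_exps _ _ ja0) => ->.
case/exists_mle_max => b; rewrite mem_filter => /andP [/existsP [j1 j1b] _] bmax.
by exists b; split; [exists j1 | move=> j e /mem_exps; apply: bmax].
Qed.

Lemma logder_exps_not_pos j0 a0 : coef a0 (logder D (x j0)) != 0 -> ~~ mlt 0 a0.
Proof.
move=> ja0; apply/negP => a0_pos.
have [b [[j1 j1b] b_top]] := exists_logder_top ja0.
have b_pos : mlt 0 b := mlt_mle_trans a0_pos (b_top _ _ ja0).
pose del : Exp := [ffun i => (i == j1)%:Z].
have weight_del : shift_weight b del = coef b (logder D (x j1)).
  rewrite /shift_weight (bigD1 j1) //= big1 ?addr0 => [|i ni]; first by rewrite ffunE eqxx mul1r.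
  by rewrite ffunE (negbTE ni) mul0r.
have [i1 E1] := shift_weight_root b_top b_pos del.
have [i2 E2] := shift_weight_root b_top b_pos (- del).
rewrite weight_del in E1; rewrite shift_weightN weight_del in E2.
(* [w + i1 s = 0 = - w + i2 s] forces [(i1 + i2) s = 0], hence [w = 0] in characteristic 0. *)
set w := coef b (logder D (x j1)) in j1b E1 E2; set s := shift_weight b b in E1 E2.
have : s *+ (i1 + i2) = 0.
  have : (w + s *+ i1) + (- w + s *+ i2) = 0 by rewrite E1 E2 addr0.
  by rewrite addrACA subrr add0r -mulrnDr.
rewrite -mulr_natr => /eqP; rewrite mulf_eq0 ((pcharf0P K).1 char0) addn_eq0.
case/orP => [/eqP s0|/andP [/eqP i10 _]]; move: E1.
  by rewrite s0 mul0rn addr0 => /eqP; rewrite (negbTE j1b).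
by rewrite i10 mulr0n addr0 => /eqP; rewrite (negbTE j1b).
Qed.

End LocallyFiniteDerivation.
End MonomialOrder.
Lemma exps0_const f : (forall a, coef a f != 0 -> a = 0) -> f = coef 0 f *: 1.
Proof.
move=> exps0; rewrite {1}(coef_supp f) (@sum_only1_seq _ _ _ _ 0) ?supp_uniq ?lmonom0 //.
- move=> e e0; have [->|/exps0 e_0] := eqVneq (coef e f) 0; first by rewrite scale0r.
  by rewrite e_0 eqxx in e0.
- by move=> /coef_notin_supp ->; rewrite scale0r.
Qed.

(* Applied to the lexicographic order and to its reverse, [logder_exps_not_pos]
   leaves [0] as the only exponent of [logder D (x j)]. *)
Lemma cartan_of_locally_finite (D : L -> L) : is_derivation D -> [pchar K] =i pred0 ->
  locally_finite D -> exists c : 'I_n -> K, forall j, D (x j) = c j *: x j.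
Proof.
move=> HD char0 D_lf.
have exps0 j a : coef a (logder D (x j)) != 0 -> a = 0.
  move=> ja; apply/eqP; apply: contraT => a0.
  have := logder_exps_not_pos (@lexltxx n) (@lexlt_trans n) (@lexlt_total n) (@lexltD2r n)
    HD char0 D_lf ja.
  have := @logder_exps_not_pos (fun a b => lexlt b a) (@lexltxx n)
    (fun a b c ab bc => lexlt_trans bc ab) (fun a b ab => @lexlt_total n b a (contra_neq esym ab))
    (fun a b c => @lexltD2r n b a c) D HD char0 D_lf _ _ ja.
  by case/orP: (lexlt_total a0) => ->.
exists (fun j => coef 0 (logder D (x j))) => j.
have -> : D (x j) = x j * logder D (x j) by rewrite /logder mulrA mulrV ?unit_gen ?mul1r.
by rewrite {1}(exps0_const (exps0 j)) -scalerAr mulr1.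
Qed.

Definition cartan_weight (c : 'I_n -> K) (e : Exp) : K := \sum_(i < n) (e i)%:~R * c i.

Section CartanElement.
Variables (D : L -> L) (c : 'I_n -> K).
Hypotheses (HD : is_derivation D) (Dc : forall j, D (x j) = c j *: x j).

Lemma der_lmonom_cartan e : D (lm e) = cartan_weight c e *: lm e.
Proof.
rewrite der_lmonom // /cartan_weight scaler_suml mulr_sumr; apply: eq_bigr => i _.
rewrite /logder Dc -scalerAr mulVr ?unit_gen //.
by rewrite -scalerA scaler_int mulrzl mulrzAr mulr_algr.
Qed.

Lemma iter_der_shift (d : K) k g :
  iter k (fun h => D h - d *: h) g =
  \sum_(e <- supp g) (coef e g * (cartan_weight c e - d) ^+ k) *: lm e.
Proof.
elim: k => [|k IH] /=; first by under eq_bigr do rewrite mulr1; exact: coef_supp.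
rewrite IH der_sum // scaler_sumr -sumrB; apply: eq_bigr => e _.
rewrite derZ // der_lmonom_cartan !scalerA -scalerBl exprS; congr (_ *: _); ring.
Qed.

Lemma iter_ad_cartan E k j : is_derivation E ->
  iter k (ad D) E (x j) = iter k (fun h => D h - c j *: h) (E (x j)).
Proof.
move=> HE; elim: k => [//|k IH].
by rewrite iterS /= -IH {1}/ad Dc (derZ (derivation_ad_iter k HD HE)).
Qed.

(* [p] has as roots all eigenvalues [cartan_weight c e - c j] of [ad D] met on [E (x j)]. *)
Lemma ad_locally_finite_cartan : ad_locally_finite D.
Proof.
move=> E HE; pose eig j := [seq cartan_weight c e - c j | e <- supp (E (x j))].
pose p := \prod_(z <- flatten [seq eig j | j <- enum 'I_n]) ('X - z%:P).
exists p; first exact/monic_neq0/monic_prod_XsubC.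
apply: derivation_eq0 => [|j].
  by apply: (@derivation_sum _ _ _ _ (fun k : 'I_(size p) => p`_k)) => k; apply: derivation_ad_iter.
under eq_bigr do rewrite iter_ad_cartan // iter_der_shift scaler_sumr.
rewrite exchange_big big1_seq //= => e e_in.
have root_p : p.[cartan_weight c e - c j] = 0.
  apply/rootP; rewrite root_prod_XsubC; apply/flattenP; exists (eig j); last exact: map_f.
  by apply: (map_f eig); rewrite mem_enum.
rewrite (_ : \sum_(k < size p) _ = (coef e (E (x j)) * p.[cartan_weight c e - c j]) *: lm e).
  by rewrite root_p mulr0 scale0r.
rewrite horner_coef mulr_sumr scaler_suml; apply: eq_bigr => k _.
by rewrite !scalerA mulrCA.
Qed.

End CartanElement.

Lemma locally_finite_of_ad (D : L -> L) g0 : is_derivation D -> D g0 != 0 ->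
  ad_locally_finite D -> locally_finite D.
Proof.
move=> HD Dg0 D_alf f; have [p p0 pE] := D_alf _ (derivation_mull f HD).
exists p => //; apply/eqP; apply: contraT => pf0.
have := laurent_mulf_neq0 (@lexltxx n) (@lexlt_trans n) (@lexlt_total n) (@lexltD2r n) pf0 Dg0.
rewrite mulr_suml; under eq_bigr do rewrite -scalerAl -iter_ad_mull //.
by rewrite pE eqxx.
Qed.

Lemma cartan_iff_ad_locally_finite (D : L -> L) : is_derivation D -> [pchar K] =i pred0 ->
  (exists c : 'I_n -> K, forall j, D (x j) = c j *: x j) <-> ad_locally_finite D.
Proof.
move=> HD char0; split=> [[c Dc]|D_alf]; first exact: ad_locally_finite_cartan Dc.
case: (classic (forall g, D g = 0)) => [D0|/not_all_ex_not [g0 /eqP Dg0]].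
  by exists (fun=> 0) => j; rewrite D0 scale0r.
exact: cartan_of_locally_finite HD char0 (locally_finite_of_ad HD Dg0 D_alf).
Qed.

End Laurent.

Section LieAutomorphism.
Variables (K : fieldType) (L : comUnitAlgType K).
Local Notation W := (Witt L).

Lemma witt_ext (A B : W) : proj1_sig A =1 proj1_sig B -> A = B.
Proof.
case: A B => [a Ha] [b Hb] /= /functional_extensionality ab.
by subst b; f_equal; apply: proof_irrelevance.
Qed.

Definition wad (D E : W) : W :=
  exist _ (ad (proj1_sig D) (proj1_sig E)) (derivation_ad (proj2_sig D) (proj2_sig E)).

Definition wlin (k : K) (A B : W) : W :=
  exist _ (fun f => k *: proj1_sig A f + proj1_sig B f)
    (derivation_lin k (proj2_sig A) (proj2_sig B)).

Definition wzero : W := exist _ (fun _ => 0) (@derivation0 K L).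

Definition wsum (r : seq (K * W)) : W := foldr (fun kv acc => wlin kv.1 kv.2 acc) wzero r.

Definition wpoly (p : {poly K}) (D E : W) : W :=
  wsum [seq (p`_k, iter k (wad D) E) | k <- index_iota 0 (size p)].

Lemma iter_wadE D E k f :
  proj1_sig (iter k (wad D) E) f = iter k (ad (proj1_sig D)) (proj1_sig E) f.
Proof. by elim: k f => [//|k IH] f /=; rewrite /ad !IH. Qed.

Lemma wsumE r f : proj1_sig (wsum r) f = \sum_(kv <- r) kv.1 *: proj1_sig kv.2 f.
Proof. by elim: r => [|kv r IH] /=; rewrite ?big_nil ?big_cons ?IH. Qed.

Lemma wpolyE p D E f : proj1_sig (wpoly p D E) f =
  \sum_(k < size p) p`_k *: iter k (ad (proj1_sig D)) (proj1_sig E) f.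
Proof. by rewrite wsumE big_map big_mkord; apply: eq_bigr => k _; rewrite iter_wadE. Qed.

Variable s : W -> W.
Hypothesis s_aut : is_lie_aut s.

Lemma lie_aut0 f : proj1_sig (s wzero) f = 0.
Proof.
have [_ [s_lin _]] := s_aut.
have : proj1_sig (s wzero) f = 1 *: proj1_sig (s wzero) f + proj1_sig (s wzero) f.
  by apply: s_lin => h; rewrite /= scale1r addr0.
by rewrite scale1r -{1}[proj1_sig _ f]addr0 => /addrI.
Qed.

Lemma lie_aut_wsum r f : proj1_sig (s (wsum r)) f = \sum_(kv <- r) kv.1 *: proj1_sig (s kv.2) f.
Proof.
have [_ [s_lin _]] := s_aut.
elim: r f => [|kv r IH] f /=; first by rewrite big_nil lie_aut0.
by rewrite (s_lin kv.1 kv.2 (wsum r) (wlin kv.1 kv.2 (wsum r)) (fun _ => erefl)) IH big_cons.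
Qed.

Lemma lie_aut_iter_wad D E k f :
  proj1_sig (s (iter k (wad D) E)) f = proj1_sig (iter k (wad (s D)) (s E)) f.
Proof.
have [_ [_ s_br]] := s_aut.
elim: k f => [//|k IH] f.
by rewrite (s_br D (iter k (wad D) E) (iter k.+1 (wad D) E) (fun _ => erefl)) /= /ad !IH.
Qed.

Lemma lie_aut_wpoly p D E f : proj1_sig (s (wpoly p D E)) f = proj1_sig (wpoly p (s D) (s E)) f.
Proof. by rewrite lie_aut_wsum wsumE !big_map; apply: eq_bigr => k _; rewrite lie_aut_iter_wad. Qed.

Lemma lie_aut_ad_locally_finite D :
  ad_locally_finite (proj1_sig D) <-> ad_locally_finite (proj1_sig (s D)).
Proof.
have [[g sK gK] _] := s_aut; split=> [D_alf E HE|sD_alf E HE].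
  have [p p0 pE] := D_alf _ (proj2_sig (g (exist _ E HE))).
  exists p => // f; have pw0 : wpoly p D (g (exist _ E HE)) = wzero.
    by apply: witt_ext => h; rewrite wpolyE pE.
  by have := lie_aut_wpoly p D (g (exist _ E HE)) f; rewrite pw0 lie_aut0 gK wpolyE.
have [p p0 pE] := sD_alf _ (proj2_sig (s (exist _ E HE))).
exists p => // f; have : s (wpoly p D (exist _ E HE)) = s wzero.
  by apply: witt_ext => h; rewrite lie_aut_wpoly lie_aut0 wpolyE pE.
by move/(can_inj sK) => pw0; have := wpolyE p D (exist _ E HE) f; rewrite pw0.
Qed.

End LieAutomorphism.

Theorem lemma2p5 (K : fieldType) (n : nat) (L : comUnitAlgType K) (x : 'I_n -> L) :
  [pchar K] =i pred0 ->
  is_laurent_algebra x ->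
  forall s : Witt L -> Witt L,
    is_lie_aut s ->
    (forall D, in_cartan x D -> in_cartan x (s D)) /\
    (forall E, in_cartan x E -> exists D, in_cartan x D /\ s D = E).
Proof.
move=> char0 Hl s s_aut.
have cartanE (D : Witt L) : in_cartan x D <-> ad_locally_finite (proj1_sig D).
  exact: (cartan_iff_ad_locally_finite Hl (proj2_sig D) char0).
split=> [D /cartanE /(lie_aut_ad_locally_finite s_aut) /cartanE //|E /cartanE E_alf].
have [[g sK gK] _] := s_aut; exists (g E); split; last exact: gK.
by apply/cartanE/(lie_aut_ad_locally_finite s_aut); rewrite gK.
Qed.
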